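(* There is an absolute constant $C>0$ such that the following holds. Let $U^*,S,p_{ijk},\widehat p_{ijk},\mathcal{W}_{ijk},\delta_{ijk}$ be as in the context, and let $U\in\mathbb{R}^{n\times r}$ be fixed (independent of $\delta$) with unit-norm columns and $|U_{il}|\le2\|(U^* )^i\|$ for all $i,l$. Fix $q\in[r]$ and unit vectors $a,b,c\in\mathbb{R}^n$ with $|a_i|,|b_i|,|c_i|\le2\|(U^* )^i\|$ for all $i$. Let $B,R$ be the $n\times n$ diagonal matrices with $B_{ii}=\sum_{j,k}\delta_{ijk}\mathcal{W}_{ijk}U_{jq}^2U_{kq}^2$ and $R_{ii}=\sum_{j,k}\delta_{ijk}\mathcal{W}_{ijk}U_{jq}U_{kq}a_jb_k$. Let $\gamma\in(0,1]$. If $m\ge\frac{C}{\gamma^2}n\log(n)S^2$, then with probability at least $1-2n^{-9}$, $$\big\|(\langle U_q,a\rangle\langle U_q,b\rangle B-R)c\big\|\le\gamma\|b\|.$$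
   Context: $U^*\in\mathbb{R}^{n\times r}$ has orthonormal columns $U^*_l$ and rows $(U^* )^i$; $S=\sum_i\|(U^* )^i\|^{3/2}$; $p_{ijk}=\frac{\|(U^* )^i\|^{3/2}\|(U^* )^j\|^{3/2}+\|(U^* )^j\|^{3/2}\|(U^* )^k\|^{3/2}+\|(U^* )^k\|^{3/2}\|(U^* )^i\|^{3/2}}{3nS^2}$; $\widehat p_{ijk}=\min\{mp_{ijk},1\}$; $\mathcal{W}_{ijk}=1/\widehat p_{ijk}$ if $\widehat p_{ijk}>0$, else $0$; $\delta_{ijk}$ are independent Bernoulli$(\widehat p_{ijk})$ random variables. *)

From Stdlib Require Import Reals ClassicalEpsilon.
From mathcomp Require Import all_boot.
Set Implicit Arguments. Unset Strict Implicit. Unset Printing Implicit Defensive.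

Local Open Scope R_scope.


Section Defs.
Variables (n r : nat).
Implicit Types (Ustar U : 'I_n -> 'I_r -> R) (x : 'I_n -> R).

Definition vnorm x : R := sqrt (\big[Rplus/R0]_(i : 'I_n) (x i)^2).

Definition orthonormal_cols Ustar : Prop :=
  forall l l' : 'I_r,
    \big[Rplus/R0]_(i : 'I_n) (Ustar i l * Ustar i l') = if l == l' then 1 else 0.

Definition rownorm Ustar (i : 'I_n) : R := sqrt (\big[Rplus/R0]_(l : 'I_r) (Ustar i l)^2).

(* ||U*^i||^{3/2}  (= (sqrt x)^3 for x >= 0) *)
Definition w32 Ustar (i : 'I_n) : R := (sqrt (rownorm Ustar i))^3.

Definition Ssum Ustar : R := \big[Rplus/R0]_(i : 'I_n) w32 Ustar i.

Definition pijk Ustar (i j k : 'I_n) : R :=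
  (w32 Ustar i * w32 Ustar j + w32 Ustar j * w32 Ustar k + w32 Ustar k * w32 Ustar i)
  / (3 * INR n * (Ssum Ustar)^2).

Definition phat Ustar (m : R) (i j k : 'I_n) : R := Rmin (m * pijk Ustar i j k) 1.

Definition Wgt Ustar (m : R) (i j k : 'I_n) : R :=
  if Rlt_dec 0 (phat Ustar m i j k) then / phat Ustar m i j k else 0.

(* a realisation of the independent Bernoulli variables delta_{ijk} *)
Definition sample := {ffun 'I_n * 'I_n * 'I_n -> bool}.

Definition delta (d : sample) (i j k : 'I_n) : R := if d (i, j, k) then 1 else 0.

Definition sample_prob Ustar (m : R) (d : sample) : R :=
  \big[Rmult/R1]_(t : 'I_n * 'I_n * 'I_n)
     (let: (i, j, k) := t in
      if d t then phat Ustar m i j k else 1 - phat Ustar m i j k).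

Definition Prob Ustar (m : R) (E : sample -> Prop) : R :=
  \big[Rplus/R0]_(d : sample)
     (if excluded_middle_informative (E d) then sample_prob Ustar m d else 0).

Definition Bdiag Ustar m U (q : 'I_r) (d : sample) (i : 'I_n) : R :=
  \big[Rplus/R0]_(j : 'I_n) \big[Rplus/R0]_(k : 'I_n)
     (delta d i j k * Wgt Ustar m i j k * (U j q)^2 * (U k q)^2).

Definition Rdiag Ustar m U (q : 'I_r) x y (d : sample) (i : 'I_n) : R :=
  \big[Rplus/R0]_(j : 'I_n) \big[Rplus/R0]_(k : 'I_n)
     (delta d i j k * Wgt Ustar m i j k * U j q * U k q * x j * y k).

Definition colinner U (q : 'I_r) x : R := \big[Rplus/R0]_(i : 'I_n) (U i q * x i).

End Defs.

(* Row i of the vector is c_i Z_i with Z_i = sum_{j,k} delta_ijk W_ijk x_jk, where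
   x_jk = <U_q,a><U_q,b> U_jq^2 U_kq^2 - U_jq U_kq a_j b_k.  As U_q is a unit vector,
   sum_{j,k} x_jk = 0, so Z_i is a centred sum of independent inverse-probability-weighted
   Bernoulli terms.  Incoherence gives |x_jk| <= 32 w_j w_k with w_j = |U*^j|^{3/2}, and
   w_j w_k is at most the numerator of p_ijk: every summand with phat_ijk < 1 is a small
   multiple of phat_ijk, and the variance proxy sum_{j,k} x_jk^2 / phat_ijk is at most
   64 * 3 n S^2 / m.  The exponential Markov inequality, with e^y <= 1 + y + 2 y^2 on
   [-1, 1], bounds P(|Z_i| >= gamma) by 2 n^-10; since c is a unit vector the norm is at
   most max_i |Z_i|, and a union bound over the n rows gives the claim with C = 15360. *)

Set Warnings "-notation-overridden -redundant-canonical-projection".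
From Stdlib Require Import Reals Lra ClassicalEpsilon.
From HB Require Import structures.
From mathcomp Require Import all_boot.
Set Implicit Arguments. Unset Strict Implicit. Unset Printing Implicit Defensive.
Local Open Scope R_scope.

Lemma RplusA : associative Rplus. Proof. by move=> *; rewrite Rplus_assoc. Qed.
Lemma RmultA : associative Rmult. Proof. by move=> *; rewrite Rmult_assoc. Qed.
HB.instance Definition _ := Monoid.isComLaw.Build R R0 Rplus RplusA Rplus_comm Rplus_0_l.
HB.instance Definition _ := Monoid.isComLaw.Build R R1 Rmult RmultA Rmult_comm Rmult_1_l.
HB.instance Definition _ := Monoid.isMulLaw.Build R R0 Rmult Rmult_0_l Rmult_0_r.
HB.instance Definition _ :=
  Monoid.isAddLaw.Build R Rmult Rplus Rmult_plus_distr_r Rmult_plus_distr_l.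

Section FiniteSums.
Variable I : finType.
Implicit Types F G : I -> R.

Lemma leR_sum F G : (forall i, F i <= G i) -> \big[Rplus/R0]_i F i <= \big[Rplus/R0]_i G i.
Proof. by move=> FG; apply: (big_ind2 (fun a b => a <= b)) => // *; lra. Qed.

Lemma sumR_ge0 (P : pred I) F : (forall i, 0 <= F i) -> 0 <= \big[Rplus/R0]_(i | P i) F i.
Proof. by move=> F0; apply: (big_ind (fun a => 0 <= a)) => // *; lra. Qed.

Lemma prodR_ge0 F : (forall i, 0 <= F i) -> 0 <= \big[Rmult/R1]_i F i.
Proof. by move=> F0; apply: (big_ind (fun a => 0 <= a)) => // *; [lra | nra]. Qed.

Lemma leR_prod F G : (forall i, 0 <= F i <= G i) ->
  \big[Rmult/R1]_i F i <= \big[Rmult/R1]_i G i.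
Proof.
move=> FG; suff [] : 0 <= \big[Rmult/R1]_i F i <= \big[Rmult/R1]_i G i by [].
apply: (big_ind2 (fun a b => 0 <= a <= b)) => //; first lra.
by move=> x1 x2 y1 y2 [? ?] [? ?]; split; nra.
Qed.

Lemma leR_sum_term F i : (forall j, 0 <= F j) -> F i <= \big[Rplus/R0]_j F j.
Proof. by move=> F0; rewrite (bigD1 i) //=; have := sumR_ge0 (fun j => j != i) F0; lra. Qed.

Lemma exp_sumR F : exp (\big[Rplus/R0]_i F i) = \big[Rmult/R1]_i exp (F i).
Proof. by apply: (big_morph exp); [exact: exp_plus | exact: exp_0]. Qed.

Lemma sumR_const (x : R) : \big[Rplus/R0]_(i : I) x = INR #|I| * x.
Proof.
rewrite big_const; elim: #|I| => [|k IH]; first by rewrite /= Rmult_0_l.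
by rewrite S_INR /= IH; ring.
Qed.

Lemma sumRB F G :
  \big[Rplus/R0]_i F i - \big[Rplus/R0]_i G i = \big[Rplus/R0]_i (F i - G i).
Proof.
suff : \big[Rplus/R0]_i (F i - G i) + \big[Rplus/R0]_i G i = \big[Rplus/R0]_i F i by lra.
by rewrite -big_split; apply: eq_bigr => i _ /=; ring.
Qed.

Lemma abs_sumR_le F : Rabs (\big[Rplus/R0]_i F i) <= \big[Rplus/R0]_i Rabs (F i).
Proof.
apply: (big_ind2 (fun a b => Rabs a <= b)) => [|x1 x2 y1 y2 *|*]; last lra.
  by rewrite Rabs_R0; lra.
by have := Rabs_triang x1 y1; lra.
Qed.

Lemma sq_le_sumR F i : \big[Rplus/R0]_j (F j)^2 = 1 -> (F i)^2 <= 1.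
Proof. by move=> <-; apply: leR_sum_term => j; apply: pow2_ge_0. Qed.

(* Cauchy-Schwarz in the weak form 2|yz| <= y^2 + z^2, enough for unit vectors. *)
Lemma sumR_abs_mul_le1 F G : \big[Rplus/R0]_i (F i)^2 = 1 -> \big[Rplus/R0]_i (G i)^2 = 1 ->
  \big[Rplus/R0]_i Rabs (F i * G i) <= 1.
Proof.
move=> F1 G1.
have : \big[Rplus/R0]_i (2 * Rabs (F i * G i)) <= \big[Rplus/R0]_i ((F i)^2 + (G i)^2).
  apply: leR_sum => i; rewrite Rabs_mult -[F i ^ 2]Rsqr_pow2 -[G i ^ 2]Rsqr_pow2.
  rewrite (Rsqr_abs (F i)) (Rsqr_abs (G i)) /Rsqr.
  by have := pow2_ge_0 (Rabs (F i) - Rabs (G i)); nra.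
by rewrite big_split F1 G1 -big_distrr /=; lra.
Qed.

End FiniteSums.

Lemma exp_le_exp_compat x y : x <= y -> exp x <= exp y.
Proof. by case/Rle_lt_or_eq_dec => [/exp_increasing/Rlt_le | ->] //; lra. Qed.

Lemma inv_pow_exp y k : 0 < y -> / y ^ k = exp (- (INR k * ln y)).
Proof. by move=> y_gt0; rewrite exp_Ropp -ln_pow // exp_ln //; apply: pow_lt. Qed.

Lemma Rinv_ge0 x : 0 <= x -> 0 <= / x.
Proof.
by case/Rle_lt_or_eq_dec => [/Rinv_0_lt_compat | <-]; [lra | rewrite Rinv_0; lra].
Qed.

(* Second-order bound; the constant 2 makes it valid on the whole of [-1, 1]. *)
Lemma exp_le_quad y : Rabs y <= 1 -> exp y <= 1 + y + 2 * y^2.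
Proof.
move=> y_abs; have y1 : -1 <= y <= 1 by move: y_abs; rewrite /Rabs; case: Rcase_abs; lra.
have expN z : exp z * exp (- z) = 1 by rewrite -exp_plus Rplus_opp_r exp_0.
have expN_le z : exp z * (1 - z) <= 1.
  by have := exp_ineq1_le (- z); have := exp_pos z; have := expN z; nra.
case: (Rle_or_lt y 0) => [y_le0 | y_gt0].
  have := expN_le y; have := exp_pos y.
  have : 1 <= (1 + y + 2 * y^2) * (1 - y) by nra.
  nra.
have half : exp y = exp (y/2) * exp (y/2) by rewrite -exp_plus; f_equal; field.
have sq : exp y * ((1 - y/2) * (1 - y/2)) <= 1.
  have e := expN_le (y/2).
  have e0 : 0 <= exp (y/2) * (1 - y/2) by apply: Rmult_le_pos; [exact/Rlt_le/exp_pos | lra].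
  have : (exp (y/2) * (1 - y/2)) * (exp (y/2) * (1 - y/2)) <= 1 by nra.
  by rewrite half; lra.
have : 1 <= (1 + y + 2 * y^2) * ((1 - y/2) * (1 - y/2)).
  have : 0 <= y^2 * ((5 - 2*y) * (1 - y)).
    by apply: Rmult_le_pos; [apply: pow2_ge_0 | apply: Rmult_le_pos; lra].
  nra.
have := exp_pos y; nra.
Qed.

(* Inverse-probability weight; 0 at p = 0, where the sample never contributes. *)
Definition ipw (p : R) : R := if Rlt_dec 0 p then / p else 0.

Lemma ipw_pos p : 0 < p -> ipw p = / p.
Proof. by rewrite /ipw; case: Rlt_dec. Qed.

Lemma ipw_0 : ipw 0 = 0.
Proof. by rewrite /ipw; case: Rlt_dec => [p0|] //; case: (Rlt_irrefl _ p0). Qed.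

Lemma ipw_ge0 p : 0 <= ipw p.
Proof.
by rewrite /ipw; case: Rlt_dec => [/Rlt_le/Rinv_ge0 | _] /=; lra.
Qed.

(* One coordinate of a Horvitz-Thompson sum; [|lam x| <= p] keeps [lam x / p] in the
   range of [exp_le_quad], and at p = 1 the coordinate is deterministic. *)
Lemma bernoulli_ipw_mgf_le p x lam q : 0 <= p <= 1 ->
  (p < 1 -> Rabs (lam * x) <= p) -> (0 < p < 1 -> 1 <= p * q) -> 0 <= q ->
  p * exp (lam * (ipw p * x)) + (1 - p) <= exp (lam * x + 2 * lam^2 * x^2 * q).
Proof.
move=> p01 small pq q0.
have var0 : 0 <= 2 * lam^2 * x^2 * q.
  by apply: Rmult_le_pos => //; have := pow2_ge_0 lam; have := pow2_ge_0 x; nra.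
have exp_ge1 z : 0 <= z -> exp 0 <= exp z by apply: exp_le_exp_compat.
case: (Req_dec p 0) => [p0 | p_neq0].
  have lamx0 : lam * x = 0.
    apply: NNPP => /Rabs_no_R0; have := small ltac:(lra); have := Rabs_pos (lam * x); lra.
  by rewrite p0 ipw_0 lamx0 Rplus_0_l; have := exp_ge1 _ var0; rewrite exp_0; lra.
case: (Req_dec p 1) => [-> | p_neq1].
  rewrite ipw_pos ?Rinv_1; last lra.
  rewrite Rmult_1_l Rmult_1_l Rminus_diag Rplus_0_r.
  by apply: exp_le_exp_compat; lra.
have p_in : 0 < p < 1 by lra.
have pinv : 0 < / p by apply: Rinv_0_lt_compat; lra.
rewrite ipw_pos; last lra.
set y := lam * (/ p * x).
have y1 : Rabs y <= 1.
  rewrite /y (_ : lam * (/ p * x) = lam * x * / p); last ring.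
  rewrite Rabs_mult Rabs_inv (Rabs_pos_eq p); last lra.
  rewrite -(Rinv_r p); last lra.
  by apply: Rmult_le_compat_r; [lra | apply: small; lra].
have expand : p * (1 + y + 2 * y^2) + (1 - p) = 1 + lam * x + 2 * lam^2 * x^2 * / p.
  by rewrite /y; field; lra.
have var_le : 2 * lam^2 * x^2 * / p <= 2 * lam^2 * x^2 * q.
  apply: Rmult_le_compat_l; first by have := pow2_ge_0 lam; have := pow2_ge_0 x; nra.
  by apply: (Rmult_le_reg_l p); [lra | rewrite Rinv_r; [apply: pq | ]; lra].
have := exp_le_quad y1; have := exp_ineq1_le (lam * x + 2 * lam^2 * x^2 * q).
nra.
Qed.

Section ProductBernoulli.
Variable T : finType.
Variable pr : T -> R.
Hypothesis pr01 : forall t, 0 <= pr t <= 1.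

Definition bweight (d : {ffun T -> bool}) : R :=
  \big[Rmult/R1]_t (if d t then pr t else 1 - pr t).

Definition bprob (E : {ffun T -> bool} -> Prop) : R :=
  \big[Rplus/R0]_d (if excluded_middle_informative (E d) then bweight d else 0).

Lemma bweight_ge0 d : 0 <= bweight d.
Proof. by apply: prodR_ge0 => t; have := pr01 t; case: (d t); lra. Qed.

Lemma expect_prod (f : T -> bool -> R) :
  \big[Rplus/R0]_d (bweight d * \big[Rmult/R1]_t f t (d t)) =
  \big[Rmult/R1]_t (pr t * f t true + (1 - pr t) * f t false).
Proof.
have -> : \big[Rmult/R1]_t (pr t * f t true + (1 - pr t) * f t false) =
    \big[Rmult/R1]_t \big[Rplus/R0]_(b : bool) ((if b then pr t else 1 - pr t) * f t b).
  by apply: eq_bigr => t _; rewrite big_bool.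
by rewrite bigA_distr_bigA; apply: eq_bigr => d _; rewrite -big_split.
Qed.

Lemma bweight_sum1 : \big[Rplus/R0]_d bweight d = 1.
Proof.
rewrite (eq_bigr (fun d => bweight d * \big[Rmult/R1]_t (fun _ _ => 1) t (d t))); last first.
  by move=> d _; rewrite big1_eq Rmult_1_r.
rewrite (expect_prod (fun _ _ => 1)) (eq_bigr (fun _ => 1)) ?big1_eq // => t _; ring.
Qed.

Lemma bprob_ge0 E : 0 <= bprob E.
Proof.
by apply: sumR_ge0 => d; case: excluded_middle_informative => _ /=; have := bweight_ge0 d; lra.
Qed.

Lemma bprob_le E F : (forall d, E d -> F d) -> bprob E <= bprob F.
Proof.
move=> EF; apply: leR_sum => d; have := bweight_ge0 d.
do 2 case: excluded_middle_informative => /= ?; try lra.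
by have : F d by auto.
Qed.

Lemma bprob_compl E : bprob E = 1 - bprob (fun d => ~ E d).
Proof.
suff : bprob E + bprob (fun d => ~ E d) = 1 by lra.
rewrite -bweight_sum1 /bprob -big_split; apply: eq_bigr => d _.
by do 2 case: excluded_middle_informative => /= ?; try tauto; ring.
Qed.

Lemma bprob_or E F : bprob (fun d => E d \/ F d) <= bprob E + bprob F.
Proof.
rewrite /bprob -big_split; apply: leR_sum => d /=; have := bweight_ge0 d.
by do 3 case: excluded_middle_informative => /= ?; try tauto; lra.
Qed.

Lemma bprob_exists (J : finType) (E : J -> {ffun T -> bool} -> Prop) :
  bprob (fun d => exists j, E j d) <= \big[Rplus/R0]_j bprob (E j).
Proof.
have term_ge0 j d : 0 <= if excluded_middle_informative (E j d) then bweight d else 0.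
  by case: excluded_middle_informative => _ /=; have := bweight_ge0 d; lra.
rewrite /bprob exchange_big; apply: leR_sum => d /=.
case: excluded_middle_informative => [[j Ej] | _] /=; last exact: sumR_ge0.
apply: Rle_trans (leR_sum_term j (term_ge0^~ d)).
by case: excluded_middle_informative => /= [_|]; [lra | tauto].
Qed.

Lemma bprob_exp_markov (Z : {ffun T -> bool} -> R) lam g : 0 <= lam ->
  bprob (fun d => g <= Z d) <=
  exp (- (lam * g)) * \big[Rplus/R0]_d (bweight d * exp (lam * Z d)).
Proof.
move=> lam0; rewrite big_distrr; apply: leR_sum => d /=.
have w0 := bweight_ge0 d; have e1 := exp_pos (- (lam * g)); have e2 := exp_pos (lam * Z d).
rewrite Rmult_comm Rmult_assoc.
case: excluded_middle_informative => gZ /=; last by apply: Rmult_le_pos => //; nra.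
suff : 1 <= exp (lam * Z d) * exp (- (lam * g)) by nra.
by rewrite -exp_plus; have := exp_ineq1_le (lam * Z d + - (lam * g)); nra.
Qed.

Definition ipw_sum (y : T -> R) (d : {ffun T -> bool}) : R :=
  \big[Rplus/R0]_t ((if d t then 1 else 0) * ipw (pr t) * y t).

Lemma ipw_sum_mgf_le (y q : T -> R) lam :
  (forall t, pr t < 1 -> Rabs (lam * y t) <= pr t) ->
  (forall t, 0 < pr t < 1 -> 1 <= pr t * q t) -> (forall t, 0 <= q t) ->
  \big[Rplus/R0]_d (bweight d * exp (lam * ipw_sum y d))
  <= exp (lam * \big[Rplus/R0]_t y t + 2 * lam^2 * \big[Rplus/R0]_t (y t ^ 2 * q t)).
Proof.
move=> small pq q0.
pose f t (b : bool) := exp (lam * ((if b then 1 else 0) * ipw (pr t) * y t)).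
have prodE d : exp (lam * ipw_sum y d) = \big[Rmult/R1]_t f t (d t).
  by rewrite -exp_sumR big_distrr.
under eq_bigr do rewrite prodE.
rewrite expect_prod !big_distrr -big_split exp_sumR /=.
apply: leR_prod => t; rewrite /f !Rmult_1_l !Rmult_0_l Rmult_0_r exp_0 Rmult_1_r.
have := pr01 t; have := exp_pos (lam * (ipw (pr t) * y t)); split; first nra.
apply: Rle_trans (bernoulli_ipw_mgf_le (pr01 t) (small t) (pq t) (q0 t)) _.
by apply: Req_le; f_equal; ring.
Qed.

Lemma ipw_sum_tail (y q : T -> R) lam g : 0 <= lam ->
  (forall t, pr t < 1 -> Rabs (lam * y t) <= pr t) ->
  (forall t, 0 < pr t < 1 -> 1 <= pr t * q t) -> (forall t, 0 <= q t) ->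
  bprob (fun d => g <= ipw_sum y d) <=
  exp (- (lam * g) + lam * \big[Rplus/R0]_t y t + 2 * lam^2 * \big[Rplus/R0]_t (y t ^ 2 * q t)).
Proof.
move=> lam0 small pq q0.
apply: Rle_trans (bprob_exp_markov _ _ lam0) _.
rewrite Rplus_assoc exp_plus; apply: Rmult_le_compat_l; first exact/Rlt_le/exp_pos.
exact: ipw_sum_mgf_le.
Qed.

End ProductBernoulli.

Section Rows.
Variable n : nat.
Notation triple := ('I_n * 'I_n * 'I_n)%type.
Variable pr : triple -> R.
Hypothesis pr01 : forall t, 0 <= pr t <= 1.

Definition row_embed (i : 'I_n) (x : 'I_n -> 'I_n -> R) (t : triple) : R :=
  if t.1.1 == i then x t.1.2 t.2 else 0.

Lemma sum_triple (G : triple -> R) :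
  \big[Rplus/R0]_t G t = \big[Rplus/R0]_i \big[Rplus/R0]_j \big[Rplus/R0]_k G (i, j, k).
Proof.
rewrite (eq_bigr (fun t => G (t.1.1, t.1.2, t.2))) => [|[[? ?] ?] _] //.
rewrite -(pair_bigA _ (fun ij k => G (ij.1, ij.2, k))) /=.
rewrite -(pair_bigA _ (fun i j => \big[Rplus/R0]_k G (i, j, k))) /=.
by [].
Qed.

Lemma sum_row (i : 'I_n) (H : triple -> R) :
  \big[Rplus/R0]_(t : triple) (if t.1.1 == i then H t else 0) =
  \big[Rplus/R0]_j \big[Rplus/R0]_k H (i, j, k).
Proof.
rewrite sum_triple (bigD1 i) //= [X in _ + X]big1 => [|i' /negbTE ->]; last first.
  by rewrite big1 // => *; rewrite big1.
by rewrite Rplus_0_r; apply: eq_bigr => j _; apply: eq_bigr => k _; rewrite eqxx.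
Qed.

Lemma sum_row_embed i (x : 'I_n -> 'I_n -> R) (f : triple -> R -> R) :
  (forall t, f t 0 = 0) ->
  \big[Rplus/R0]_t f t (row_embed i x t) = \big[Rplus/R0]_j \big[Rplus/R0]_k f (i, j, k) (x j k).
Proof.
move=> f0; rewrite -(sum_row i (fun t => f t (x t.1.2 t.2))).
by apply: eq_bigr => t _; rewrite /row_embed; case: eqP.
Qed.

Lemma row_chernoff i (x qv : 'I_n -> 'I_n -> R) lam g : 0 <= lam ->
  (forall j k, pr (i, j, k) < 1 -> Rabs (lam * x j k) <= pr (i, j, k)) ->
  (forall j k, 0 < pr (i, j, k) < 1 -> 1 <= pr (i, j, k) * qv j k) ->
  (forall j k, 0 <= qv j k) ->
  bprob pr (fun d => g <= ipw_sum pr (row_embed i x) d) <=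
  exp (- (lam * g) + lam * \big[Rplus/R0]_j \big[Rplus/R0]_k x j k
       + 2 * lam^2 * \big[Rplus/R0]_j \big[Rplus/R0]_k (x j k ^ 2 * qv j k)).
Proof.
move=> lam0 small pq q0.
(* Off the row the summand vanishes, so any q with [1 <= pr t * q t] will do there. *)
pose q (t : triple) := if t.1.1 == i then qv t.1.2 t.2 else ipw (pr t).
have := @ipw_sum_tail _ pr pr01 (row_embed i x) q lam g lam0.
rewrite (@sum_row_embed i x (fun _ v => v)) //.
rewrite (@sum_row_embed i x (fun t v => v ^ 2 * q t)) => [|t]; last ring.
have -> : \big[Rplus/R0]_j \big[Rplus/R0]_k (x j k ^ 2 * q (i, j, k)) =
    \big[Rplus/R0]_j \big[Rplus/R0]_k (x j k ^ 2 * qv j k).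
  by apply: eq_bigr => j _; apply: eq_bigr => k _; rewrite /q /= eqxx.
apply.
- move=> [[i' j] k]; rewrite /row_embed /=; case: eqP => [-> | _]; first exact: small.
  by rewrite Rmult_0_r Rabs_R0; case: (pr01 (i', j, k)).
- move=> [[i' j] k]; rewrite /q /=; case: eqP => [-> | _]; first exact: pq.
  by move=> [p0 _]; rewrite ipw_pos // Rinv_r; lra.
- by move=> [[i' j] k]; rewrite /q /=; case: eqP => _; [exact: q0 | exact: ipw_ge0].
Qed.

End Rows.

Lemma abs_mul_le_cube t y z : 0 <= t -> Rabs y <= 2 * t^2 -> Rabs z <= 2 * t^2 ->
  y^2 <= 1 -> z^2 <= 1 -> Rabs (y * z) <= 4 * t^3.
Proof.
move=> t0 yt zt y1 z1; rewrite Rabs_mult.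
have abs_le1 v : v^2 <= 1 -> Rabs v <= 1.
  by move=> v1; rewrite -Rabs_R1; apply: Rsqr_le_abs_0; rewrite Rsqr_pow2 /Rsqr; lra.
have := Rabs_pos y; have := Rabs_pos z; have := abs_le1 _ y1; have := abs_le1 _ z1.
case: (Rle_or_lt t 1) => t1 *.
  have : Rabs y * Rabs z <= (2 * t^2) * (2 * t^2) by apply: Rmult_le_compat.
  by have := pow_le t 3 t0; nra.
by have : 1 <= t^3; nra.
Qed.

Lemma abs_mul_le_w32 n r (Ustar : 'I_n -> 'I_r -> R) (y z : R) j :
  Rabs y <= 2 * rownorm Ustar j -> Rabs z <= 2 * rownorm Ustar j -> y^2 <= 1 -> z^2 <= 1 ->
  Rabs (y * z) <= 4 * w32 Ustar j.
Proof.
have rhoE : rownorm Ustar j = (sqrt (rownorm Ustar j))^2.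
  by rewrite /= Rmult_1_r sqrt_sqrt //; apply: sqrt_pos.
rewrite rhoE; apply: abs_mul_le_cube; exact: sqrt_pos.
Qed.

Lemma diff_of_products_bounds al u1 u2 g h w1 w2 :
  Rabs al <= 1 -> 0 <= u1 <= 4 * w1 -> 0 <= u2 <= 4 * w2 -> Rabs g <= 4 * w1 -> Rabs h <= 4 * w2 ->
  Rabs (al * u1 * u2 - g * h) <= 32 * (w1 * w2) /\
  (al * u1 * u2 - g * h)^2 <= 32 * (w1 * w2) * (u1 * u2 + Rabs g * Rabs h).
Proof.
move=> al1 [u10 u1w] [u20 u2w] gw hw.
have := Rabs_pos g; have := Rabs_pos h; have := Rabs_pos al => al0 h0 g0.
have uu : 0 <= u1 * u2 <= 16 * (w1 * w2).
  by split; [nra | have := Rmult_le_compat _ _ _ _ u10 u20 u1w u2w; lra].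
have gh : 0 <= Rabs g * Rabs h <= 16 * (w1 * w2).
  by split; [nra | have := Rmult_le_compat _ _ _ _ g0 h0 gw hw; lra].
have alu : Rabs (al * u1 * u2) <= u1 * u2.
  by rewrite !Rabs_mult (Rabs_pos_eq u1) // (Rabs_pos_eq u2) //; nra.
have ghE : Rabs (g * h) = Rabs g * Rabs h by rewrite Rabs_mult.
have tri : Rabs (al * u1 * u2 - g * h) <= Rabs (al * u1 * u2) + Rabs g * Rabs h.
  by rewrite -ghE -(Rabs_Ropp (g * h)); apply: Rabs_triang.
split; first lra.
have sq v : v^2 = Rabs v * Rabs v by rewrite -Rsqr_pow2 Rsqr_abs.
rewrite sq.
have := Rabs_pos (al * u1 * u2 - g * h); have := Rabs_pos (al * u1 * u2).
nra.
Qed.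

Section Sampling.
Variables (n r : nat) (Ustar : 'I_n -> 'I_r -> R) (m : R).

Definition pnum (i j k : 'I_n) : R :=
  w32 Ustar i * w32 Ustar j + w32 Ustar j * w32 Ustar k + w32 Ustar k * w32 Ustar i.

Definition pden : R := 3 * INR n * Ssum Ustar ^ 2.

Definition phat3 (t : 'I_n * 'I_n * 'I_n) : R := phat Ustar m t.1.1 t.1.2 t.2.

Lemma w32_ge0 i : 0 <= w32 Ustar i.
Proof. by apply: pow_le; apply: sqrt_pos. Qed.

Lemma w32_mul_le_pnum i j k : 0 <= w32 Ustar j * w32 Ustar k <= pnum i j k.
Proof.
have := w32_ge0 i; have := w32_ge0 j; have := w32_ge0 k.
by rewrite /pnum; split; nra.
Qed.

Lemma pden_ge0 : 0 <= pden.
Proof. by rewrite /pden; have := pos_INR n; have := pow2_ge_0 (Ssum Ustar); nra. Qed.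

Lemma phat3_01 : 0 <= m -> forall t, 0 <= phat3 t <= 1.
Proof.
move=> m0 [[i j] k]; rewrite /phat3 /phat /=; split; last exact: Rmin_r.
apply: Rmin_glb; last lra; apply: Rmult_le_pos => //.
change (pijk Ustar i j k) with (pnum i j k / pden).
have := w32_mul_le_pnum i j k; have := pden_ge0 => /Rinv_ge0 ? ?.
by apply: Rmult_le_pos => //; lra.
Qed.

Lemma Prob_bprob E : Prob Ustar m E = bprob phat3 E.
Proof. by apply: eq_bigr => d _; congr (if _ then _ else _); apply: eq_bigr => [[[i j] k]]. Qed.

Lemma phat3_lt1 i j k : phat3 (i, j, k) < 1 -> phat3 (i, j, k) = m * (pnum i j k / pden).
Proof. by rewrite /phat3 /phat /Rmin /=; case: Rle_dec => //; lra. Qed.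

Definition row_dev (x : 'I_n -> 'I_n -> R) d i := ipw_sum phat3 (row_embed i x) d.

Section RowTail.
Variables (x K : 'I_n -> 'I_n -> R) (i : 'I_n).
Hypothesis K_ge0 : forall j k, 0 <= K j k.
Hypothesis x_bounds : forall j k, Rabs (x j k) <= 32 * (w32 Ustar j * w32 Ustar k) /\
  x j k ^ 2 <= 32 * (w32 Ustar j * w32 Ustar k) * K j k.
Hypothesis K_sum : \big[Rplus/R0]_j \big[Rplus/R0]_k K j k <= 2.

(* On the undersampled triples, [1 / phat3] is [pden / (m pnum)]. *)
Definition row_var_proxy (j k : 'I_n) : R := pden / (m * pnum i j k).

Lemma row_variance_le : 0 < m -> 0 < pden ->
  \big[Rplus/R0]_j \big[Rplus/R0]_k (x j k ^ 2 * row_var_proxy j k) <= 64 * pden / m.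
Proof.
move=> m_gt0 pden_gt0; have c_gt0 : 0 < 32 * pden / m.
  by apply: Rmult_lt_0_compat; [lra | exact: Rinv_0_lt_compat].
apply: Rle_trans (_ : \big[Rplus/R0]_j \big[Rplus/R0]_k (32 * pden / m * K j k) <= _).
  apply: leR_sum => j; apply: leR_sum => k; rewrite /row_var_proxy.
  have [_ xK] := x_bounds j k; have K0 := K_ge0 j k; have [w0 wnum] := w32_mul_le_pnum i j k.
  case: (Rle_lt_or_eq_dec _ _ (Rle_trans _ _ _ w0 wnum)) => [num_gt0 | <-].
    have : x j k ^ 2 <= 32 * pnum i j k * K j k by nra.
    have : 0 < pden / (m * pnum i j k).
      by apply: Rmult_lt_0_compat => //; apply/Rinv_0_lt_compat/Rmult_lt_0_compat.
    move=> q_gt0 /(Rmult_le_compat_r _ _ _ (Rlt_le _ _ q_gt0)) h.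
    by apply: Rle_trans h (Req_le _ _ _); field; lra.
  by rewrite Rmult_0_r /Rdiv Rinv_0 Rmult_0_r Rmult_0_r; nra.
rewrite (eq_bigr (fun j => 32 * pden / m * \big[Rplus/R0]_k K j k)) => [|j _]; last first.
  by rewrite big_distrr.
rewrite -big_distrr /= (_ : 64 * pden / m = 32 * pden / m * 2); last by field; lra.
by apply: Rmult_le_compat_l; [lra | exact: K_sum].
Qed.

Lemma row_var_proxy_ge0 j k : 0 <= m -> 0 <= row_var_proxy j k.
Proof.
move=> m0; rewrite /row_var_proxy /Rdiv; apply: Rmult_le_pos; first exact: pden_ge0.
by apply: Rinv_ge0; have [? ?] := w32_mul_le_pnum i j k; nra.
Qed.

Lemma phat3_row_var_proxy j k : 0 < phat3 (i, j, k) < 1 ->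
  phat3 (i, j, k) * row_var_proxy j k = 1.
Proof.
move=> [p_gt0 /phat3_lt1 pE]; rewrite pE in p_gt0 *.
have [? ?] := w32_mul_le_pnum i j k.
have [m_neq0 num_neq0 pden_neq0] : [/\ m <> 0, pnum i j k <> 0 & pden <> 0].
  by split => e; move: p_gt0; rewrite e ?Rmult_0_l ?Rmult_0_r /Rdiv ?Rmult_0_l ?Rinv_0 ?Rmult_0_r; lra.
by rewrite /row_var_proxy; field.
Qed.

(* The Chernoff parameter is [lam = gamma m / (256 pden)]; each summand is then small. *)
Lemma row_term_small gamma j k : 0 < gamma <= 1 -> 0 < m -> 0 < pden ->
  phat3 (i, j, k) < 1 -> Rabs (gamma * m / (256 * pden) * x j k) <= phat3 (i, j, k).
Proof.
move=> gamma01 m_gt0 pden_gt0 /phat3_lt1 ->.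
have lam_gt0 : 0 < gamma * m / (256 * pden).
  by apply: Rmult_lt_0_compat; [nra | apply: Rinv_0_lt_compat; lra].
rewrite Rabs_mult (Rabs_pos_eq _ (Rlt_le _ _ lam_gt0)).
have [w0 wnum] := w32_mul_le_pnum i j k; have [x_le _] := x_bounds j k.
apply: Rle_trans (_ : gamma * m / (256 * pden) * (32 * pnum i j k) <= _).
  by apply: Rmult_le_compat_l; lra.
rewrite (_ : gamma * m / (256 * pden) * (32 * pnum i j k) = gamma / 8 * (m * (pnum i j k / pden)));
  last by field; lra.
have : 0 <= m * (pnum i j k / pden).
  by apply: Rmult_le_pos; [lra | apply: Rmult_le_pos; [lra | apply/Rlt_le/Rinv_0_lt_compat]].
nra.
Qed.

Lemma row_dev_upper_tail gamma : 0 < gamma <= 1 -> 0 < m -> 0 < pden ->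
  5120 * ln (INR n) * pden <= gamma^2 * m ->
  \big[Rplus/R0]_j \big[Rplus/R0]_k x j k = 0 ->
  bprob phat3 (fun d => gamma <= row_dev x d i) <= / INR n ^ 10.
Proof.
move=> gamma01 m_gt0 pden_gt0 rate x_sum0.
have n_gt0 : 0 < INR n.
  by move: pden_gt0; rewrite /pden; have := pos_INR n; have := pow2_ge_0 (Ssum Ustar); nra.
set lam := gamma * m / (256 * pden).
have lam_gt0 : 0 < lam by apply: Rmult_lt_0_compat; [nra | apply: Rinv_0_lt_compat; lra].
have m0 := Rlt_le _ _ m_gt0.
apply: Rle_trans (row_chernoff (phat3_01 m0) (i := i) (x := x) (qv := row_var_proxy) gamma
  (Rlt_le _ _ lam_gt0) _ _ _) _.
- by move=> j k; apply: row_term_small.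
- by move=> j k /phat3_row_var_proxy ->; lra.
- by move=> j k; apply: row_var_proxy_ge0.
rewrite x_sum0 Rmult_0_r Rplus_0_r inv_pow_exp // (_ : INR 10 = 10); last by rewrite /=; ring.
apply: exp_le_exp_compat.
have lam2 : 0 <= 2 * lam^2 by have := pow2_ge_0 lam; lra.
have := Rmult_le_compat_l _ _ _ lam2 (row_variance_le m_gt0 pden_gt0).
have -> : 2 * lam^2 * (64 * pden / m) = gamma^2 * m / (512 * pden) by rewrite /lam; field; lra.
have -> : lam * gamma = 2 * (gamma^2 * m / (512 * pden)) by rewrite /lam; field; lra.
have : 10 * ln (INR n) <= gamma^2 * m / (512 * pden).
  apply: (Rmult_le_reg_r (512 * pden)); first lra.
  by rewrite (_ : gamma^2 * m / (512 * pden) * (512 * pden) = gamma^2 * m); [lra | field; lra].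
lra.
Qed.

End RowTail.

Lemma row_dev_opp x d i : row_dev (fun j k => - x j k) d i = - row_dev x d i.
Proof.
suff : row_dev (fun j k => - x j k) d i + row_dev x d i = 0 by lra.
by rewrite /row_dev /ipw_sum -big_split big1 // => t _; rewrite /row_embed; case: eqP => _ /=; ring.
Qed.

Lemma row_dev_tail (x K : 'I_n -> 'I_n -> R) i gamma :
  (forall j k, 0 <= K j k) ->
  (forall j k, Rabs (x j k) <= 32 * (w32 Ustar j * w32 Ustar k) /\
     x j k ^ 2 <= 32 * (w32 Ustar j * w32 Ustar k) * K j k) ->
  \big[Rplus/R0]_j \big[Rplus/R0]_k K j k <= 2 ->
  0 < gamma <= 1 -> 0 < m -> 0 < pden -> 5120 * ln (INR n) * pden <= gamma^2 * m ->
  \big[Rplus/R0]_j \big[Rplus/R0]_k x j k = 0 ->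
  bprob phat3 (fun d => gamma <= Rabs (row_dev x d i)) <= 2 / INR n ^ 10.
Proof.
move=> K0 x_bounds K_sum gamma01 m_gt0 pden_gt0 rate x_sum0.
have pr01 := phat3_01 (Rlt_le _ _ m_gt0).
pose y j k := - x j k.
have y_bounds j k : Rabs (y j k) <= 32 * (w32 Ustar j * w32 Ustar k) /\
    y j k ^ 2 <= 32 * (w32 Ustar j * w32 Ustar k) * K j k.
  by rewrite /y Rabs_Ropp (_ : (- x j k)^2 = x j k ^ 2); [exact: x_bounds | ring].
have y_sum0 : \big[Rplus/R0]_j \big[Rplus/R0]_k y j k = 0.
  suff : \big[Rplus/R0]_j \big[Rplus/R0]_k y j k + \big[Rplus/R0]_j \big[Rplus/R0]_k x j k = 0.
    by lra.
  rewrite -big_split big1 // => j _; rewrite -big_split big1 // => k _ /=.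
  by rewrite /y; ring.
apply: Rle_trans (bprob_le pr01
  (F := fun d => gamma <= row_dev x d i \/ gamma <= row_dev y d i) _) _.
  by move=> d; rewrite row_dev_opp /Rabs; case: Rcase_abs; lra.
apply: Rle_trans (bprob_or pr01 _ _) _.
have := row_dev_upper_tail i K0 x_bounds K_sum gamma01 m_gt0 pden_gt0 rate x_sum0.
have := row_dev_upper_tail i K0 y_bounds K_sum gamma01 m_gt0 pden_gt0 rate y_sum0.
rewrite /Rdiv; lra.
Qed.

(* 15360 = 3 * 5120: the sample-size assumption as a lower bound on the rate [m / pden]. *)
Lemma sample_rate gamma : (1 < n)%N -> 0 < gamma -> 0 < Ssum Ustar ->
  m >= 15360 / gamma^2 * INR n * ln (INR n) * Ssum Ustar ^ 2 ->
  [/\ 0 < m, 0 < pden & 5120 * ln (INR n) * pden <= gamma^2 * m].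
Proof.
move=> n_gt1 gamma_gt0 S_gt0 m_ge.
have n2 : 2 <= INR n by apply: (le_INR 2); apply/leP.
have ln_gt0 : 0 < ln (INR n) by rewrite -ln_1; apply: ln_increasing; lra.
have pden_gt0 : 0 < pden by apply: Rmult_lt_0_compat; [lra | apply: pow_lt].
have gamma2 : 0 < gamma^2 by apply: pow_lt.
have rate : 5120 * ln (INR n) * pden <= gamma^2 * m.
  rewrite (_ : 5120 * ln (INR n) * pden =
      gamma^2 * (15360 / gamma^2 * INR n * ln (INR n) * Ssum Ustar ^ 2)); last first.
    by rewrite /pden; field; lra.
  by apply: Rmult_le_compat_l; lra.
by split => //; have := Rmult_lt_0_compat _ _ ln_gt0 pden_gt0; nra.
Qed.

Section Deviation.
Variables (U : 'I_n -> 'I_r -> R) (q : 'I_r) (a b : 'I_n -> R).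
Hypothesis Uq1 : \big[Rplus/R0]_i (U i q)^2 = 1.
Hypothesis a1 : \big[Rplus/R0]_i (a i)^2 = 1.
Hypothesis b1 : \big[Rplus/R0]_i (b i)^2 = 1.
Hypothesis U_le : forall i l, Rabs (U i l) <= 2 * rownorm Ustar i.
Hypothesis a_le : forall i, Rabs (a i) <= 2 * rownorm Ustar i.
Hypothesis b_le : forall i, Rabs (b i) <= 2 * rownorm Ustar i.

Definition dev_coef (j k : 'I_n) : R :=
  colinner U q a * colinner U q b * (U j q)^2 * (U k q)^2 - U j q * U k q * a j * b k.

Lemma row_devE d i :
  colinner U q a * colinner U q b * Bdiag Ustar m U q d i - Rdiag Ustar m U q a b d i =
  row_dev dev_coef d i.
Proof.
rewrite /row_dev /ipw_sum (@sum_row_embed _ i _ (fun t v => (if d t then 1 else 0) * ipw (phat3 t) * v));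
  last by move=> t; ring.
rewrite /Bdiag /Rdiag big_distrr sumRB; apply: eq_bigr => j _.
rewrite big_distrr sumRB; apply: eq_bigr => k _.
by rewrite /dev_coef /delta /Wgt /phat3 /ipw /=; ring.
Qed.

(* The estimator is unbiased because the column U_q has unit norm. *)
Lemma dev_coef_sum0 : \big[Rplus/R0]_j \big[Rplus/R0]_k dev_coef j k = 0.
Proof.
have sep (F G : 'I_n -> R) : \big[Rplus/R0]_j \big[Rplus/R0]_k (F j * G k) =
    \big[Rplus/R0]_j F j * \big[Rplus/R0]_k G k by rewrite big_distrlr.
rewrite (eq_bigr (fun j => \big[Rplus/R0]_k
    ((colinner U q a * colinner U q b * (U j q)^2) * (U k q)^2)
    - \big[Rplus/R0]_k ((U j q * a j) * (U k q * b k)))); last first.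
  by move=> j _; rewrite sumRB; apply: eq_bigr => k _; rewrite /dev_coef; ring.
by rewrite -sumRB !sep -big_distrr Uq1 /colinner /=; ring.
Qed.

Definition dev_mass (j k : 'I_n) : R :=
  (U j q)^2 * (U k q)^2 + Rabs (U j q * a j) * Rabs (U k q * b k).

Lemma dev_mass_ge0 j k : 0 <= dev_mass j k.
Proof.
by apply: Rplus_le_le_0_compat; apply: Rmult_le_pos; apply: pow2_ge_0 || apply: Rabs_pos.
Qed.

Lemma dev_mass_sum_le2 : \big[Rplus/R0]_j \big[Rplus/R0]_k dev_mass j k <= 2.
Proof.
rewrite /dev_mass (eq_bigr (fun j => (U j q)^2 * \big[Rplus/R0]_k (U k q)^2 +
    Rabs (U j q * a j) * \big[Rplus/R0]_k Rabs (U k q * b k))); last first.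
  by move=> j _; rewrite !big_distrr -big_split.
rewrite big_split -!big_distrl /= Uq1.
have := Rmult_le_compat _ _ _ _ (sumR_ge0 _ (fun j => Rabs_pos (U j q * a j)))
  (sumR_ge0 _ (fun j => Rabs_pos (U j q * b j)))
  (sumR_abs_mul_le1 Uq1 a1) (sumR_abs_mul_le1 Uq1 b1).
by move=> /(Rplus_le_compat_l (1 * 1)) /Rle_trans; apply; lra.
Qed.

Lemma dev_coef_bounds j k :
  Rabs (dev_coef j k) <= 32 * (w32 Ustar j * w32 Ustar k) /\
  dev_coef j k ^ 2 <= 32 * (w32 Ustar j * w32 Ustar k) * dev_mass j k.
Proof.
have Uw i : 0 <= (U i q)^2 <= 4 * w32 Ustar i.
  have := abs_mul_le_w32 (U_le i q) (U_le i q) (sq_le_sumR i Uq1) (sq_le_sumR i Uq1).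
  by have := Rle_abs (U i q * U i q); have := pow2_ge_0 (U i q); rewrite /= !Rmult_1_r; lra.
have inner_le v : \big[Rplus/R0]_i (v i)^2 = 1 -> Rabs (colinner U q v) <= 1.
  by move=> v1; apply: Rle_trans (abs_sumR_le _) (sumR_abs_mul_le1 Uq1 v1).
have al1 : Rabs (colinner U q a * colinner U q b) <= 1.
  rewrite Rabs_mult; have := inner_le _ a1; have := inner_le _ b1.
  by have := Rabs_pos (colinner U q a); have := Rabs_pos (colinner U q b); nra.
rewrite /dev_coef (_ : U j q * U k q * a j * b k = (U j q * a j) * (U k q * b k)); last ring.
apply: diff_of_products_bounds => //.
- exact: abs_mul_le_w32 (U_le j q) (a_le j) (sq_le_sumR j Uq1) (sq_le_sumR j a1).
- exact: abs_mul_le_w32 (U_le k q) (b_le k) (sq_le_sumR k Uq1) (sq_le_sumR k b1).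
Qed.

End Deviation.

End Sampling.

Lemma vnorm1_sumR_sq n (v : 'I_n -> R) : vnorm v = 1 -> \big[Rplus/R0]_i (v i)^2 = 1.
Proof.
rewrite /vnorm => v1; rewrite -(sqrt_sqrt (\big[Rplus/R0]_i (v i)^2)) ?v1; first ring.
by apply: sumR_ge0 => i; apply: pow2_ge_0.
Qed.

Lemma vnorm_mul_le n (z c : 'I_n -> R) g : 0 <= g -> (forall i, Rabs (z i) <= g) ->
  vnorm c = 1 -> vnorm (fun i => z i * c i) <= g.
Proof.
move=> g0 z_le /vnorm1_sumR_sq c1; rewrite /vnorm -(sqrt_pow2 g g0).
apply: sqrt_le_1_alt; rewrite -[g ^ 2]Rmult_1_r -c1 big_distrr.
apply: leR_sum => i; rewrite Rpow_mult_distr; apply: Rmult_le_compat_r; first exact: pow2_ge_0.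
by rewrite -Rsqr_pow2 -Rsqr_pow2 Rsqr_abs; apply: Rsqr_incr_1 => //; exact: Rabs_pos.
Qed.

Lemma Ssum_gt0 n r (Ustar : 'I_n -> 'I_r -> R) (a : 'I_n -> R) :
  \big[Rplus/R0]_i (a i)^2 = 1 -> (forall i, Rabs (a i) <= 2 * rownorm Ustar i) ->
  0 < Ssum Ustar.
Proof.
move=> a1 a_le.
have [i a_i] : exists i, a i <> 0.
  apply: NNPP => a0; move: a1; rewrite big1 => [|i _]; first lra.
  have -> : a i = 0 by apply: NNPP => ?; apply: a0; exists i.
  ring.
have rho_i : 0 < rownorm Ustar i by have := Rabs_pos_lt _ a_i; have := a_le i; lra.
apply: Rlt_le_trans (leR_sum_term i (@w32_ge0 _ _ Ustar)).
by apply: pow_lt; apply: sqrt_lt_R0.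
Qed.

Theorem mainTheorem8 :
  exists C : R, 0 < C /\
  forall (n r : nat) (Ustar U : 'I_n -> 'I_r -> R) (q : 'I_r)
         (a b c : 'I_n -> R) (gamma m : R),
    orthonormal_cols Ustar ->
    (forall l : 'I_r, \big[Rplus/R0]_(i : 'I_n) (U i l)^2 = 1) ->
    (forall (i : 'I_n) (l : 'I_r), Rabs (U i l) <= 2 * rownorm Ustar i) ->
    vnorm a = 1 -> vnorm b = 1 -> vnorm c = 1 ->
    (forall i : 'I_n, Rabs (a i) <= 2 * rownorm Ustar i) ->
    (forall i : 'I_n, Rabs (b i) <= 2 * rownorm Ustar i) ->
    (forall i : 'I_n, Rabs (c i) <= 2 * rownorm Ustar i) ->
    0 < gamma <= 1 ->
    m >= C / gamma^2 * INR n * ln (INR n) * (Ssum Ustar)^2 ->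
    Prob Ustar m (fun d =>
      vnorm (fun i : 'I_n =>
        (colinner U q a * colinner U q b * Bdiag Ustar m U q d i
         - Rdiag Ustar m U q a b d i) * c i)
      <= gamma * vnorm b)
    >= 1 - 2 * / (INR n ^ 9).
Proof.
exists 15360; split; first lra.
move=> n r Ustar U q a b c gamma m _ U1 U_le a1 b1 c1 a_le b_le _ gamma01 m_ge.
have a1' := vnorm1_sumR_sq a1; have b1' := vnorm1_sumR_sq b1.
have S_gt0 := Ssum_gt0 a1' a_le.
rewrite Prob_bprob.
have [n_le1 | n_gt1] := leqP n 1.
  have n_gt0 : (0 < n)%N.
    rewrite lt0n; apply/eqP => n0; move: a1'; rewrite big1 => [|i]; first lra.
    by have := ltn_ord i; rewrite {2}n0.
  have n1 : INR n = 1 by rewrite (_ : n = 1%N) //; apply/eqP; rewrite eqn_leq n_le1 n_gt0.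
  have m0 : 0 <= m by move: m_ge; rewrite n1 ln_1 Rmult_0_r Rmult_0_l; lra.
  rewrite n1 pow1 Rinv_1; apply: Rle_ge.
  by apply: Rle_trans (bprob_ge0 (phat3_01 Ustar m0) _); lra.
have [m_gt0 pden_gt0 rate] := sample_rate n_gt1 (proj1 gamma01) S_gt0 m_ge.
have pr01 := phat3_01 Ustar (Rlt_le _ _ m_gt0).
rewrite bprob_compl b1 Rmult_1_r.
apply: Rle_ge; apply: Rplus_le_compat_l; apply: Ropp_le_contravar.
apply: Rle_trans (bprob_le pr01
  (F := fun d => exists i, gamma <= Rabs (row_dev Ustar m (dev_coef U q a b) d i)) _) _.
  move=> d bad; apply: NNPP => good; apply: bad.
  apply: vnorm_mul_le c1 => [|i]; first lra.
  by rewrite row_devE; apply: Rlt_le; apply: Rnot_le_lt => ?; apply: good; exists i.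
apply: Rle_trans (bprob_exists pr01 _) _.
apply: Rle_trans (leR_sum (fun i => row_dev_tail i (dev_mass_ge0 U q a b)
  (dev_coef_bounds (U1 q) a1' b1' U_le a_le b_le) (dev_mass_sum_le2 (U1 q) a1' b1')
  gamma01 m_gt0 pden_gt0 rate (dev_coef_sum0 a b (U1 q)))) _.
rewrite sumR_const card_ord; apply: Req_le; field.
by have := le_INR 2 n (leP n_gt1); rewrite /=; lra.
Qed.
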